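(* Let $s(\cdot)\in\mathcal{P}(\mathbb{R})$ with $s(x)=s_0>2$ for all $x\in[0,1]$. Then the kernel $K(x,y)=K_1(x-y)K_2(y)$ does not belong to $H_{s(\cdot),1}$.
   Context: Here $n=1$. Fix $\beta>0$; $K_1(t)=\chi_{[2,3]}(t)$ and $K_2(t)=t^{-1/2}\big[\log(e/t)\big]^{-\frac{1+\beta}{2}}\chi_{(0,1)}(t)$. Cubes are intervals $Q$; $mQ$ is the concentric interval of length $m\ell(Q)$. $\mathcal{P}(\mathbb{R})$: measurable $p(\cdot):\mathbb{R}\to[1,\infty]$; $\|f\|_{p(\cdot)}=\inf\{\lambda>0:\int_{\{p<\infty\}}|f/\lambda|^{p(x)}dx+\|(f/\lambda)\chi_{\{p=\infty\}}\|_\infty\le1\}$. $K\in H_{s(\cdot),1}$ means $\sup_Q\sup_{x,z\in\frac12Q}\sum_{m\ge1}2^m\ell(Q)\frac{\|[K(x,\cdot)-K(z,\cdot)]\chi_{2^mQ\setminus2^{m-1}Q}\|_{s(\cdot)}}{\|\chi_{2^mQ}\|_{s(\cdot)}}<\infty$ (in particular all terms must be finite). *)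

From HB Require Import structures.
From mathcomp Require Import all_boot all_order all_algebra.
From mathcomp Require Import all_classical all_reals all_analysis measurable_realfun ess_sup_inf.
Set Implicit Arguments. Unset Strict Implicit. Unset Printing Implicit Defensive.
Import Order.TTheory GRing.Theory Num.Theory.
Import numFieldNormedType.Exports.
Local Open Scope classical_set_scope.
Local Open Scope ring_scope.

Section Defs.
Variable R : realType.

Definition var_exponent (p : R -> \bar R) : Prop :=
  measurable_fun [set: R] p /\ (forall x, (1 <= p x)%E).

Definition var_modular (p : R -> \bar R) (f : R -> R) (lam : R) : \bar R :=
  (\int[@lebesgue_measure R]_(x in [set x | (p x < +oo)%E])
      ((`|f x| / lam) `^ fine (p x))%:E
   + ess_sup (@lebesgue_measure R)
       (fun x => if p x == +oo%E then (`|f x| / lam)%:E else 0%E))%E.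

(* Luxemburg norm ||f||_{p(.)} (inf of empty set = +oo) *)
Definition var_norm (p : R -> \bar R) (f : R -> R) : \bar R :=
  ereal_inf [set lam%:E | lam in
             [set lam : R | 0 < lam /\ (var_modular p f lam <= 1)%E]].

Definition K1 (t : R) : R := if (2 <= t <= 3) then 1 else 0.

Definition K2 (beta : R) (t : R) : R :=
  if (0 < t < 1) then
    t `^ (- (1 / 2)) * (ln (expR 1 / t)) `^ (- ((1 + beta) / 2))
  else 0.

Definition cube (c l : R) : set R := [set y | c - l / 2 <= y <= c + l / 2].

Definition in_H (s : R -> \bar R) (K : R -> R -> R) : Prop :=
  exists C : R, forall (c l : R), 0 < l ->
    forall x z, cube c (l / 2) x -> cube c (l / 2) z ->
    (\sum_(1 <= m <oo)
        ((2 ^+ m * l)%R%:E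
         * var_norm s (fun y => ((K x y - K z y)
              * \1_(cube c (2 ^+ m * l) `\` cube c (2 ^+ m.-1 * l)) y)%R)
         / var_norm s (\1_(cube c (2 ^+ m * l)) : R -> R))
     <= C%:E)%E.

End Defs.

From HB Require Import structures.
From mathcomp Require Import all_boot all_order all_algebra.
From mathcomp Require Import all_classical all_reals all_analysis measurable_realfun ess_sup_inf.
From mathcomp Require Import ring lra.
Import Order.TTheory GRing.Theory Num.Theory.
Local Open Scope classical_set_scope.
Local Open Scope ring_scope.

(* Take the interval Q = [1, 3] centred at 2 and the points x = 5/2, z = 3/2 of Q/2.
   On the first annulus 2Q \ Q = [0, 4] \ [1, 3] the difference K(x, .) - K(z, .)
   coincides with K2 on (0, 1/2], where s = s0 > 2.  Writing u = -ln y,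
   (K2 y / lam)^s0 = exp ((s0/2) u - O(ln u)), and since s0/2 > 1 this beats
   exp (u + C) = C'/y for small y; hence for every lam the modular of the
   difference on some [a, 2a] exceeds 1, its Luxemburg norm is +oo, whereas the
   indicator of 2Q has norm at most |2Q| + 1.  The m = 1 term of the series is +oo. *)

(* Unlike ge0_le_integral, no measurability is needed: a nonnegative integral is
   a supremum over simple functions below the integrand. *)
Lemma ge0_le_integral_subset d (T : measurableType d) (R : realType)
    (mu : {measure set T -> \bar R}) (D E : set T) (f g : T -> \bar R) :
  D `<=` E -> (forall x, D x -> (0 <= f x)%E) -> (forall x, E x -> (0 <= g x)%E) ->
  (forall x, D x -> (f x <= g x)%E) ->
  (\int[mu]_(x in D) f x <= \int[mu]_(x in E) g x)%E.
Proof.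
move=> DE f0 g0 fg; rewrite !ge0_integralE //; apply: ereal_sup_le => _ [h hf <-].
exists h => //= x; apply: le_trans (hf x) _; rewrite /patch.
case: ifPn => [/[1!inE] Dx|_]; first by rewrite mem_set ?fg //; exact: DE.
by case: ifPn => // /[1!inE] /g0.
Qed.

Section real_bounds.
Context {R : realType}.

Lemma ln_le_tangent (eps x : R) : 0 < eps -> 0 < x -> ln x <= eps * x - 1 - ln eps.
Proof.
move=> eps0 x0; have epsx0 : 0 < eps * x by rewrite mulr_gt0.
have := @le_ln1Dx R (eps * x - 1); rewrite addrCA subrr addr0 lnM ?posrE //.
by move=> /(_ ltac:(lra)); lra.
Qed.

Lemma linear_dominates_ln (k b c : R) : 0 < k -> 0 < b ->
  exists2 U, 0 <= U & forall u, U <= u -> c <= k * u - b * ln (1 + u).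
Proof.
move=> k0 b0; pose eps := k / (2 * b).
have eps0 : 0 < eps by rewrite divr_gt0 // mulr_gt0.
have beps : b * eps = k / 2 by rewrite /eps; field; lra.
pose U0 := 2 / k * (c + k / 2 - b - b * ln eps).
have kU0 : c + k / 2 - b - b * ln eps = k / 2 * U0 by rewrite /U0; field; lra.
exists (Num.max 0 U0 : R) => [|u Uu]; first by rewrite le_max lexx.
have [u0 U0u] : 0 <= u /\ U0 <= u by move: Uu; rewrite ge_max => /andP.
have := @ln_le_tangent eps (1 + u) eps0 ltac:(lra) => /(ler_wpM2l (ltW b0)).
rewrite !mulrBr mulrA beps => hln.
have : k / 2 * U0 <= k / 2 * u by rewrite ler_wpM2l // divr_ge0 // ltW.
lra.
Qed.

Lemma gt0_mulye_div_fin (a : R) (v : \bar R) :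
  0 < a -> (0 <= v)%E -> (v < +oo)%E -> (a%:E * +oo / v = +oo)%E.
Proof.
move=> a0; case: v => [r r0 _||//] /=; last by move=> _; rewrite ltxx.
have {r0} r0 : 0 <= r by rewrite -lee_fin.
rewrite mulry gtr0_sg // mul1e inver.
case: eqP => [_|/eqP r_neq0]; first by rewrite mulyy.
by rewrite gt0_mulye // lte_fin invr_gt0 lt0r r_neq0.
Qed.


End real_bounds.

Section K2_blowup.
Context {R : realType}.

Lemma K2_ge0 (beta y : R) : 0 <= K2 beta y.
Proof. by rewrite /K2; case: ifP => // _; rewrite mulr_ge0 // powR_ge0. Qed.

Lemma powR_K2_div (beta s0 lam y : R) : 0 < y < 1 -> 0 < lam ->
  (K2 beta y / lam) `^ s0
  = expR (s0 / 2 * - ln y - s0 * (1 + beta) / 2 * ln (1 - ln y) - s0 * ln lam).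
Proof.
move=> /andP[y0 y1] lam0.
have ln_y : ln y < 0 by rewrite ln_lt0 // y0.
have ln_e_y : ln (expR 1 / y) = 1 - ln y by rewrite ln_div ?posrE ?expR_gt0 // expRK.
have ln_e_y0 : 0 < ln (expR 1 / y) by rewrite ln_e_y; lra.
rewrite /K2 y0 y1 /= -[LHS]lnK ?posrE ?powR_gt0 ?divr_gt0 ?mulr_gt0 ?powR_gt0 //.
rewrite ln_powR ln_div ?posrE ?mulr_gt0 ?powR_gt0 // lnM ?posrE ?powR_gt0 //.
by rewrite !ln_powR ln_e_y; congr expR; ring.
Qed.

Lemma K2_powR_blowup {beta s0 lam : R} : 0 < beta -> 2 < s0 -> 0 < lam ->
  exists a : R, [/\ 0 < a, a <= 4^-1 &
    forall y, a <= y <= 2 * a -> 2 / a <= (K2 beta y / lam) `^ s0].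
Proof.
move=> beta0 s2 lam0.
have ln2_gt0 : 0 < ln 2 :> R by apply: ln_gt0; lra.
have ln2_le1 : ln 2 <= 1 :> R by have := @le_ln1Dx R 1 ltac:(lra); rewrite -[1 + 1]/2.
have [U U0 hU] := @linear_dominates_ln R (s0 / 2 - 1) (s0 * (1 + beta) / 2)
  (2 * ln 2 + s0 * ln lam) ltac:(lra) ltac:(rewrite !mulr_gt0 //; lra).
pose v := U + 3; pose a := expR (- v).
have a0 : 0 < a := expR_gt0 _.
have a_le : a <= 4^-1.
  rewrite /a expRN lef_pV2 ?posrE ?expR_gt0 //.
  by apply: le_trans (expR_ge1Dx _); rewrite /v; lra.
exists a; split => // y /andP[ay ya].
have y0 : 0 < y := lt_le_trans a0 ay.
have u_ge : v - ln 2 <= - ln y.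
  have : ln y <= ln (2 * a) by rewrite ler_ln ?posrE ?mulr_gt0.
  by rewrite lnM ?posrE // expRK; lra.
have := hU (- ln y) ltac:(rewrite /v in u_ge; lra).
rewrite mulrBl mul1r powR_K2_div ?y0 //=; last lra.
have -> : 2 / a = expR (ln 2 + v) by rewrite /a expRD expRN invrK lnK ?posrE.
by rewrite ler_expR; lra.
Qed.

End K2_blowup.

Section variable_exponent_norm.
Context {R : realType}.
Local Notation mu := (@lebesgue_measure R).
Implicit Types (p : R -> \bar R) (f : R -> R).

Lemma var_norm_ge0 p f : (0 <= var_norm p f)%E.
Proof. by apply: le_ereal_inf_tmp => _ [lam [lam0 _] <-]; rewrite lee_fin ltW. Qed.

Lemma var_norm_pinfty p f :
  (forall lam, 0 < lam -> (1 < var_modular p f lam)%E) -> var_norm p f = +oo%E.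
Proof.
move=> modular_gt1; rewrite /var_norm (_ : [set _ | _ in _] = set0) ?ereal_inf0 //.
apply/seteqP; split => // _ [lam [lam0 lam1] <-].
by have := modular_gt1 lam lam0; rewrite ltNge lam1.
Qed.

Lemma var_modular_ge_integral p f lam : 0 < lam ->
  (\int[mu]_(x in [set x | (p x < +oo)%E]) ((`|f x| / lam) `^ fine (p x))%:E
   <= var_modular p f lam)%E.
Proof.
move=> lam0; rewrite /var_modular -[X in (X <= _)%E]adde0 leeD2l //.
have muT_gt0 : (0 < mu [set: R])%E.
  apply: (@lt_le_trans _ _ (mu `[0, 1]%classic)); last by apply: le_measure; rewrite ?inE.
  by rewrite lebesgue_measure_itv /= lte01 oppr0 adde0 lte01.
apply: ess_sup_gee => //; apply: nearW => x; case: ifP => // _.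
by rewrite lee_fin divr_ge0 // ltW.
Qed.

Lemma var_norm_indic_le {p} {A : set R} {l : R} :
  (forall x, (1 <= p x)%E) -> measurable A -> mu A = l%:E ->
  (var_norm p (\1_A : R -> R) <= (l + 1)%:E)%E.
Proof.
move=> p1 mA muA; have l0 : 0 <= l by rewrite -lee_fin -muA measure_ge0.
apply: ereal_inf_lbound; exists (l + 1) => //; split; first lra.
set lam := l + 1; have lam0 : 0 < lam by rewrite /lam; lra.
have ilam0 : 0 < lam^-1 by rewrite invr_gt0.
have ilam1 : lam^-1 <= 1 by rewrite invr_le1 ?unitfE ?gt_eqF // /lam; lra.
have -> : 1%E = ((lam^-1 * l)%:E + (lam^-1)%:E)%E.
  by rewrite -EFinD -[X in _ + X]mulr1 -mulrDr mulVf ?gt_eqF.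
have ind01 x : `|\1_A x : R| / lam = if x \in A then lam^-1 else 0.
  by rewrite indicE; case: ifP; rewrite ?normr1 ?normr0 ?mul1r ?mul0r.
apply: leeD; last first.
  apply/ess_supP; apply: nearW => x; case: ifP => _; last by rewrite lee_fin ltW.
  by rewrite lee_fin ind01; case: ifP => _ //; exact: ltW.
apply: le_trans (@ge0_le_integral_subset _ _ _ mu _ setT _
  (fun x => (lam^-1)%:E * (\1_A x)%:E)%E _ _ _ _) _ => //.
- by move=> x _; rewrite lee_fin powR_ge0.
- by move=> x _; rewrite -EFinM lee_fin mulr_ge0 // ltW.
- move=> x /=; have := p1 x; case: (p x) => [r r1 _| //|//] /=.
  rewrite lee_fin in r1; rewrite -EFinM lee_fin ind01 indicE.
  case: ifP => _; rewrite ?mulr1 ?mulr0; first by apply: ge1r_powR; rewrite ?ilam0.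
  by rewrite powR0 //; apply/negP => /eqP; lra.
rewrite ge0_integralZl_EFin //; last 2 first.
- by apply/measurable_EFinP; exact: measurable_indic.
- exact: ltW.
rewrite integral_indic // setIT.
by rewrite [X in (_ * X <= _)%E](_ : _ = l%:E) // -EFinM.
Qed.

End variable_exponent_norm.

Section K2_norm.
Context {R : realType}.
Local Notation mu := (@lebesgue_measure R).

Lemma var_norm_K2_pinfty {beta s0 : R} {s : R -> \bar R} {f : R -> R} :
  0 < beta -> 2 < s0 -> (forall x, 0 <= x <= 1 -> s x = s0%:E) ->
  (forall y, 0 < y <= 2^-1 -> f y = K2 beta y) ->
  var_norm s f = +oo%E.
Proof.
move=> beta0 s2 s_eq f_eq; apply: var_norm_pinfty => lam lam0.
have [a [a0 a_le blowup]] := K2_powR_blowup beta0 s2 lam0.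
apply: lt_le_trans (var_modular_ge_integral s f lam lam0).
apply: (@lt_le_trans _ _ 2%:E); first by rewrite lte_fin ltr1n.
have -> : 2%:E = (\int[mu]_(x in `[a, (2 * a)%R]%classic) (cst (2 / a)%R%:E) x)%E.
  rewrite integral_cst //= lebesgue_measure_itv /= lte_fin ifT; last lra.
  by rewrite -EFinB -EFinM; congr EFin; field; lra.
apply: ge0_le_integral_subset => [x|x _|x _|x] /=; rewrite ?in_itv /=.
- by move=> /andP[ax xa]; rewrite s_eq ?ltry //; lra.
- by rewrite lee_fin divr_ge0 //; lra.
- by rewrite lee_fin powR_ge0.
move=> /andP[ax xa]; rewrite s_eq /=; last lra.
by rewrite f_eq ?ger0_norm ?K2_ge0 ?lee_fin ?blowup //; lra.
Qed.

End K2_norm.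

Section first_annulus.
Context {R : realType}.

Lemma cube_itv (c l : R) : cube c l = `[c - l / 2, c + l / 2]%classic.
Proof. by apply/seteqP; split => x /=; rewrite in_itv. Qed.

Lemma var_norm_indic_cube_fin (s : R -> \bar R) (c l : R) :
  (forall x, (1 <= s x)%E) -> 0 < l ->
  (var_norm s (\1_(cube c l) : R -> R) < +oo)%E.
Proof.
move=> s1 l0; have mQ : measurable (cube c l) by rewrite cube_itv.
have muQ : lebesgue_measure (cube c l) = l%:E.
  rewrite cube_itv lebesgue_measure_itv /= lte_fin ifT; last lra.
  by rewrite -EFinB; congr EFin; lra.
exact: le_lt_trans (var_norm_indic_le s1 mQ muQ) (ltry _).
Qed.

Lemma kernel_diff_annulus (beta y : R) : 0 < y <= 2^-1 ->
  ((K1 (5/2 - y) * K2 beta y - K1 (3/2 - y) * K2 beta y)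
     * \1_(cube 2 (2 ^+ 1 * 2) `\` cube 2 (2 ^+ 1.-1 * 2)) y)%R = K2 beta y.
Proof.
move=> /andP[y0 y2]; rewrite indicE mem_set /=; last first.
  rewrite /cube expr1 expr0; split; first by apply/andP; split; lra.
  by move=> /andP[]; lra.
rewrite /K1 ifT; last by apply/andP; split; lra.
rewrite ifF; last by apply/negP => /andP[]; lra.
by rewrite mul1r mul0r subr0 mulr1.
Qed.

End first_annulus.

Theorem mainTheorem18 (R : realType) (beta : R) (s : R -> \bar R) (s0 : R) :
  0 < beta ->
  var_exponent s ->
  2 < s0 ->
  (forall x : R, 0 <= x <= 1 -> s x = s0%:E) ->
  ~ in_H s (fun x y => K1 (x - y) * K2 beta y).
Proof.
move=> beta0 [_ s1] s2 s_eq [C HC].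
have Qx : cube 2 (2 / 2) (5 / 2 : R) by apply/andP; split; lra.
have Qz : cube 2 (2 / 2) (3 / 2 : R) by apply/andP; split; lra.
move: (HC 2 2 ltac:(lra) _ _ Qx Qz); apply/negP; rewrite -ltNge.
apply: lt_le_trans (nneseries_lim_ge 2%N _) => [|m _ _]; last first.
  by rewrite !mule_ge0 ?inve_ge0 ?var_norm_ge0.
rewrite big_nat1 (var_norm_K2_pinfty beta0 s2 s_eq (kernel_diff_annulus beta)).
by rewrite gt0_mulye_div_fin ?var_norm_ge0 ?var_norm_indic_cube_fin ?ltry // expr1 mulr_gt0.
Qed.
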